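(* Let $n\geq1$, $w=e^{2\pi i/n}$ and $F=(w^{ij}/\sqrt n)_{i,j=0}^{n-1}$. Let $\Phi$ be the map on $n\times n$ circulant complex matrices defined by $\Phi\big((x_{j-i})_{i,j}\big)=\big((Fx)_{j-i}\big)_{i,j}$, where $x=(x_0,\ldots,x_{n-1})^t$ is the first row. Then $\Phi$ restricts to a bijection from $C^{circ}_n(\infty)$ onto $C^{circ}_n(\infty)$, and this bijection maps $C^{circ}_n(2)$ onto $C^{circ,sa}_n(\infty)$. More precisely, for a circulant $H$: $H\in\sqrt n\,U(n)$ iff all entries of $\Phi(H)$ have modulus one, and $H\in\sqrt n\,O(n)$ (real orthogonal times $\sqrt n$) iff $\Phi(H)$ is self-adjoint with all entries of modulus one.
   Context: A complex Hadamard matrix of order $n$ is a matrix $H$ with $|H_{ij}|=1$ and $H/\sqrt n$ unitary. $C^{circ}_n(\infty)$ is the set of $n\times n$ circulant complex Hadamard matrices ($H_{ij}$ depends only on $j-i$ mod $n$); $C^{circ}_n(2)$ is the subset of those with entries in $\{\pm1\}$; $C^{circ,sa}_n(\infty)$ is the subset of self-adjoint (Hermitian) ones. *)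

From HB Require Import structures.
From mathcomp Require Import all_boot all_order all_algebra.
From mathcomp Require Import algC.
Set Implicit Arguments. Unset Strict Implicit. Unset Printing Implicit Defensive.
Import Order.TTheory GRing.Theory Num.Theory.
Local Open Scope ring_scope.

Lemma ord_pos n (i : 'I_n) : (0 < n)%N.
Proof. exact: leq_ltn_trans (leq0n _) (ltn_ord i). Qed.

Definition cdiff n (i j : 'I_n) : 'I_n :=
  Ordinal (ltn_pmod (j + n - i)%N (ord_pos i)).

Definition circ n (x : 'rV[algC]_n) : 'M[algC]_n :=
  \matrix_(i, j) x 0 (cdiff i j).

(* w = e^{2 pi i / n}: n.-root (-1) is the n-th root of -1 with maximal real
   part among those with nonnegative imaginary part, i.e. e^{i pi / n}. *)
Definition omega (n : nat) : algC := (n.-root (-1)) ^+ 2.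

Definition fourier n : 'M[algC]_n :=
  \matrix_(i, j) (omega n ^+ (i * j) / sqrtC n%:R).

Definition fourier_vec n (x : 'rV[algC]_n) : 'rV[algC]_n :=
  \row_i \sum_j fourier n i j * x 0 j.

(* Phi (circ x) = circ (F x) *)
Definition Phi n (x : 'rV[algC]_n) : 'M[algC]_n := circ (fourier_vec x).

Definition adjmx n (A : 'M[algC]_n) : 'M[algC]_n := (map_mx (fun z : algC => z^*) A)^T.

Definition unitary n (U : 'M[algC]_n) : Prop :=
  U *m adjmx U = 1%:M /\ adjmx U *m U = 1%:M.

Definition real_orthogonal n (O : 'M[algC]_n) : Prop :=
  (forall i j, O i j \is Num.real) /\ O *m O^T = 1%:M /\ O^T *m O = 1%:M.

Definition in_sqrtU n (H : 'M[algC]_n) : Prop :=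
  exists U, unitary U /\ H = sqrtC n%:R *: U.

Definition in_sqrtO n (H : 'M[algC]_n) : Prop :=
  exists O, real_orthogonal O /\ H = sqrtC n%:R *: O.

Definition unimodular n (H : 'M[algC]_n) : Prop := forall i j, `|H i j| = 1.

Definition complex_hadamard n (H : 'M[algC]_n) : Prop :=
  unimodular H /\ unitary ((sqrtC n%:R)^-1 *: H).

Definition Ccirc n (x : 'rV[algC]_n) : Prop := complex_hadamard (circ x).
Definition Ccirc2 n (x : 'rV[algC]_n) : Prop :=
  Ccirc x /\ forall i j, circ x i j = 1 \/ circ x i j = -1.
Definition Ccirc_sa n (x : 'rV[algC]_n) : Prop :=
  Ccirc x /\ adjmx (circ x) = circ x.

(* The orthogonality of the
   characters j |-> w^(jk) makes F unitary and F^2 the reversal k |-> -k, so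
   F^4 = 1.  A circulant is diagonalised by F: circ x = F D F^* with
   D = sqrt n diag(F x), hence circ x / sqrt n is unitary iff every entry of
   F x has modulus one, i.e. iff Phi(circ x) is unimodular, and Phi(circ x) is
   self-adjoint iff x is real.  So Phi permutes C^circ_n(oo) with inverse
   x |-> F^3 x, and reality of x is what separates C^circ_n(2) and sqrt n O(n).
   The only non-formal input is that w = n.-root(-1)^2 is a primitive n-th
   root of unity: n.-root(-1) is the root of X^n + 1 of largest real part in
   the closed upper half plane, and rotating a point of the upper half plane
   counterclockwise decreases its real part. *)

From HB Require Import structures.
From mathcomp Require Import all_boot all_order all_algebra.
From mathcomp Require Import algC cyclotomic.
From mathcomp Require Import ring lra zify.

Set Implicit Arguments.
Unset Strict Implicit.
Unset Printing Implicit Defensive.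

Import Order.TTheory GRing.Theory Num.Theory.
Local Open Scope ring_scope.

Lemma rotation_Re_lt (R : realFieldType) (c s a b : R) :
  c ^+ 2 + s ^+ 2 = 1 -> a ^+ 2 + b ^+ 2 = 1 ->
  0 <= s -> 0 < b -> 0 <= c * b + a * s -> c * a - s * b < c.
Proof.
move=> cs1 ab1 s_ge0 b_gt0 Im_ge0.
have a_lt1 : a < 1 by nra.
have E : b * (c - (c * a - s * b)) = (1 - a) * (c * b + a * s + s) by nra.
have : 0 < c * b + a * s + s.
  have [s0|s_neq0] := eqVneq s 0; first by subst s; nra.
  have : 0 < s by rewrite lt_neqAle eq_sym s_neq0.
  nra.
nra.
Qed.

Lemma rotation_Im_ge0 (R : realFieldType) (c1 s1 c2 s2 : R) :
  c1 ^+ 2 + s1 ^+ 2 = 1 -> c2 ^+ 2 + s2 ^+ 2 = 1 ->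
  0 <= s1 -> 0 <= s2 -> c1 < c2 -> 0 <= s1 * c2 - c1 * s2.
Proof.
move=> cs1 cs2 s1_ge0 s2_ge0 c1_lt_c2.
have [c1_ge0|c1_lt0] := lerP 0 c1.
  have : s2 <= s1 by nra.
  nra.
have [c2_ge0|c2_lt0] := lerP 0 c2; first by nra.
have : s1 <= s2 by nra.
nra.
Qed.

(* [nra] needs a totally ordered field, so facts about ['Re] and ['Im] are
   transported to [algR]. *)
Lemma algR_leE (x y : algR) : (x <= y) = (val x <= val y). Proof. by []. Qed.
Lemma algR_ltE (x y : algR) : (x < y) = (val x < val y). Proof. by []. Qed.

Lemma norm1_ReIm (u : algC) : `|u| = 1 ->
  in_algR (Creal_Re u) ^+ 2 + in_algR (Creal_Im u) ^+ 2 = 1.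
Proof. by move=> u1; apply/val_inj; rewrite /= -normC2_Re_Im u1 expr1n. Qed.

Lemma Re_mul_lt (u y : algC) : `|u| = 1 -> `|y| = 1 ->
  0 <= 'Im u -> 0 < 'Im y -> 0 <= 'Im (u * y) -> 'Re (u * y) < 'Re u.
Proof.
move=> u1 y1; rewrite ReM ImM.
by have := rotation_Re_lt (norm1_ReIm u1) (norm1_ReIm y1); rewrite !algR_leE !algR_ltE; apply.
Qed.

Lemma Im_mul_conj_ge0 (r w : algC) : `|r| = 1 -> `|w| = 1 ->
  0 <= 'Im r -> 0 <= 'Im w -> 'Re r < 'Re w -> 0 <= 'Im (r * w^*).
Proof.
move=> r1 w1; rewrite ImM Re_conj Im_conj mulrN addrC ['Re w * _]mulrC.
by have := rotation_Im_ge0 (norm1_ReIm r1) (norm1_ReIm w1); rewrite !algR_leE !algR_ltE; apply.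
Qed.

Lemma pm1_iff_real_norm1 (R : numDomainType) (z : R) : (z = 1 \/ z = -1) <-> z \is Num.real /\ `|z| = 1.
Proof.
split=> [[]->|[zR z1]]; rewrite ?rpredN ?rpred1 ?normrN ?normr1 //.
by rewrite (realEsign zR) z1 mulr1; case: (z < 0); [right|left].
Qed.

Lemma sqr_eq1_pm1 (R : idomainType) (x : R) : x ^+ 2 = 1 -> x = 1 \/ x = -1.
Proof. by move/eqP; rewrite sqrf_eq1 => /orP[] /eqP; [left|right]. Qed.

Lemma norm_unity_root (R : numDomainType) (z : R) k : (0 < k)%N -> z ^+ k = 1 -> `|z| = 1.
Proof.
move=> k_gt0 zk; apply/eqP; rewrite -(pexpr_eq1 k_gt0) ?normr_ge0 //.
by rewrite -normrX zk normr1.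
Qed.

Lemma exists_false_true_succ (f : nat -> bool) a b :
  (a <= b)%N -> ~~ f a -> f b -> exists t, ~~ f t /\ f t.+1.
Proof.
move=> + nfa; elim: b => [|b IH] ab fb.
  by move: ab; rewrite leqn0 => /eqP a0; rewrite a0 fb in nfa.
case fb': (f b); last by exists b; rewrite fb'.
move: ab; rewrite leq_eqVlt => /orP[/eqP ab|ab]; first by rewrite ab fb in nfa.
exact: IH.
Qed.

(* Im (z r^i) changes sign every d steps, so the orbit crosses the real axis
   upwards; there r = z r^t.+1 (z r^t)^* with z r^t below the axis, which puts
   z r^t.+1 to the right of r. *)
Lemma exists_rotation_Re_gt (r z : algC) d : `|r| = 1 -> `|z| = 1 -> 0 <= 'Im r ->
  r ^+ d = -1 -> (forall i, 'Im (z * r ^+ i) != 0) ->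
  exists t, 0 < 'Im (z * r ^+ t) /\ 'Re r < 'Re (z * r ^+ t).
Proof.
move=> r1 z1 Imr rd Im_neq0.
pose f i := 0 < 'Im (z * r ^+ i).
have Im_lt0 i : ~~ f i -> 'Im (z * r ^+ i) < 0.
  by rewrite lt_neqAle Im_neq0 real_leNgt ?Creal_Im ?rpred0.
have Im_flip i : 'Im (z * r ^+ (i + d)) = - 'Im (z * r ^+ i).
  by rewrite exprD rd mulrN1 mulrN raddfN.
have [t [nft ft1]] : exists t, ~~ f t /\ f t.+1.
  case f0: (f 0).
    apply: (@exists_false_true_succ f d (d + d)); first by rewrite leq_addr.
      by rewrite /f -(add0n d) Im_flip oppr_gt0 -real_leNgt ?Creal_Im ?rpred0 // ltW.
    by rewrite /f Im_flip -(add0n d) Im_flip opprK.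
  apply: (@exists_false_true_succ f 0 d) => //; first by rewrite f0.
  by rewrite /f -(add0n d) Im_flip oppr_gt0 Im_lt0 ?f0.
have norm_zr i : `|z * r ^+ i| = 1 by rewrite normrM normrX r1 expr1n z1 mulr1.
exists t.+1; split => //.
have rE : (z * r ^+ t.+1) * (z * r ^+ t)^* = r.
  by rewrite exprS mulrCA -mulrA -normCK norm_zr expr1n mulr1.
rewrite -{1}rE; apply: Re_mul_lt; rewrite ?norm_conjC ?rE //; first exact: ltW.
by rewrite Im_conj oppr_gt0 Im_lt0.
Qed.

Lemma rootCN1_Re_max_unity N (w : algC) : (1 < N)%N ->
  w ^+ (N + N) = 1 -> 0 < 'Im w -> 'Re w <= 'Re (N.-root (-1)).
Proof.
move=> N_gt1 w2N Imw; have N_gt0 := ltnW N_gt1; set r := N.-root (-1).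
have r1 : `|r| = 1 by rewrite norm_rootC normrN1 rootC1.
have w1 : `|w| = 1 by apply: (norm_unity_root _ w2N); rewrite addn_gt0 N_gt0.
have : (w ^+ N) ^+ 2 = 1 by rewrite -exprM muln2 -addnn.
case/sqr_eq1_pm1 => wN; last exact: rootC_Re_max N_gt0 wN (ltW Imw).
(* A root w of X^N - 1 to the right of r yields the root r w^* of X^N + 1,
   which lies in the upper half plane and is even further right. *)
rewrite real_leNgt ?Creal_Re //; apply/negP => r_lt_w.
have Imr : 0 <= 'Im r by apply: Im_rootC_ge0.
pose y := r * w^*.
have yw : y * w = r by rewrite /y -mulrA -normCKC w1 expr1n mulr1.
have y1 : `|y| = 1 by rewrite normrM norm_conjC w1 r1 mulr1.
have Imy : 0 <= 'Im y := Im_mul_conj_ge0 r1 w1 Imr (ltW Imw) r_lt_w.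
have yN : y ^+ N = -1 by rewrite exprMn -rmorphXn wN rmorph1 mulr1 rootCK.
have : 'Re y <= 'Re r := rootC_Re_max N_gt0 yN Imy.
by rewrite -{1}yw real_leNgt ?Creal_Re // Re_mul_lt ?yw.
Qed.

Lemma exists_lt_expr_eqN1 (r : algC) N m : (0 < m < N)%N ->
  r ^+ N = -1 -> r ^+ (m + m) = 1 -> exists2 d, (0 < d < N)%N & r ^+ d = -1.
Proof.
move=> /andP[m_gt0 m_ltN] rN r2m.
have : (r ^+ m) ^+ 2 = 1 by rewrite -exprM muln2 -addnn.
case/sqr_eq1_pm1 => rm; last by exists m; rewrite ?m_gt0.
exists (N %% m)%N; last by rewrite GRing.expr_mod.
rewrite (ltn_trans (ltn_pmod _ m_gt0)) // andbT lt0n.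
apply/eqP => Nm0; move/eqP: rN.
by rewrite -(GRing.expr_mod N rm) Nm0 expr0 eq_sym eqNr oner_eq0.
Qed.

Lemma Im_prim_mul_expr_neq0 (rho r : algC) N d i :
  (N + N).-primitive_root rho -> `|r| = 1 -> (0 < d < N)%N -> r ^+ d = -1 ->
  'Im (rho * r ^+ i) != 0.
Proof.
move=> rho_prim r1 /andP[d_gt0 d_ltN] rd.
have rho1 : `|rho| = 1.
  exact: norm_unity_root (prim_order_gt0 rho_prim) (prim_expr_order rho_prim).
have : rho ^+ (d + d) != 1.
  by rewrite -(prim_order_dvd rho_prim); apply/negP => /dvdn_leq; lia.
apply: contra => /eqP/Creal_ImP rhor_real.
have : (rho * r ^+ i) ^+ 2 = 1.
  have [|->|->] := (pm1_iff_real_norm1 (rho * r ^+ i)).2; rewrite ?sqrrN ?expr1n //.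
  by rewrite normrM normrX r1 rho1 expr1n mulr1.
move/(congr1 (fun z => z ^+ d)); rewrite expr1n -exprM exprMn -!exprM.
have -> : (i * (2 * d) = d * (2 * i))%N by lia.
by rewrite [r ^+ _]exprM rd [(-1) ^+ _]exprM sqrrN !expr1n mulr1 mul2n -addnn => ->.
Qed.

(* If r^2 had order m < N, some r^d with 0 < d < N would be -1; the orbit of a
   primitive 2N-th root of unity under r then avoids the real axis, and its
   upward crossing is a 2N-th root of unity to the right of r. *)
Lemma rootCN1_sqr_prim N : (1 < N)%N -> N.-primitive_root (N.-root (-1 : algC) ^+ 2).
Proof.
move=> N_gt1; have N_gt0 := ltnW N_gt1; set r := N.-root (-1).
have rN : r ^+ N = -1 by rewrite rootCK.
have r1 : `|r| = 1 by rewrite norm_rootC normrN1 rootC1.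
have r2N : (r ^+ 2) ^+ N = 1 by rewrite -exprM mulnC exprM rN sqrrN expr1n.
have [m r2m m_dvdN] := prim_order_exists N_gt0 r2N.
have [<-//|m_neqN] := eqVneq m N.
have m_lt : (0 < m < N)%N by rewrite (prim_order_gt0 r2m) ltn_neqAle m_neqN dvdn_leq.
have r2m1 : r ^+ (m + m) = 1 by rewrite addnn -mul2n exprM prim_expr_order.
have [d d_lt rd] := exists_lt_expr_eqN1 m_lt rN r2m1.
have NN_gt0 : (0 < N + N)%N by rewrite addn_gt0 N_gt0.
have [rho rho_prim] := C_prim_root_exists NN_gt0.
have [t [Imw Re_lt]] := exists_rotation_Re_gt r1 (norm_unity_root NN_gt0 (prim_expr_order rho_prim))
  (Im_rootC_ge0 _ N_gt1) rd (fun i => Im_prim_mul_expr_neq0 i rho_prim r1 d_lt rd).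
have w2N : (rho * r ^+ t) ^+ (N + N) = 1.
  rewrite exprMn (prim_expr_order rho_prim) mul1r -exprM mulnC exprM.
  by rewrite exprD rN mulrNN mulr1 expr1n.
have := rootCN1_Re_max_unity N_gt1 w2N Imw.
by rewrite real_leNgt ?Creal_Re // Re_lt.
Qed.

Lemma omega_prim n : (0 < n)%N -> n.-primitive_root (omega n).
Proof.
case: n => [//|[_|n _]]; last exact: rootCN1_sqr_prim.
rewrite /omega root1C sqrrN expr1n.
by apply/andP; split=> //; apply/forallP => -[[|k] hk]; rewrite ?unity_rootE ?expr1n ?eqxx.
Qed.

Lemma adjmxE n (A : 'M[algC]_n) i j : adjmx A i j = (A j i)^*.
Proof. by rewrite !mxE. Qed.

Lemma adjmxK n : involutive (@adjmx n).
Proof. by move=> A; apply/matrixP => i j; rewrite !mxE conjCK. Qed.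

Lemma adjmx_mul n (A B : 'M[algC]_n) : adjmx (A *m B) = adjmx B *m adjmx A.
Proof.
apply/matrixP => i j; rewrite !mxE rmorph_sum; apply: eq_bigr => k _.
by rewrite !mxE rmorphM mulrC.
Qed.

Lemma adjmx_scale n a (A : 'M[algC]_n) : adjmx (a *: A) = a^* *: adjmx A.
Proof. by apply/matrixP => i j; rewrite !mxE rmorphM. Qed.

Lemma adjmx_diag n (d : 'rV[algC]_n) : adjmx (diag_mx d) = diag_mx (map_mx Num.conj d).
Proof. by apply/matrixP => i j; rewrite !mxE rmorphMn eq_sym; case: eqP => // ->. Qed.

Lemma adjmx_real n (O : 'M[algC]_n) : (forall i j, O i j \is Num.real) -> adjmx O = O^T.
Proof. by move=> O_real; apply/matrixP => i j; rewrite !mxE conj_Creal. Qed.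

Section Circulant.

Variable n : nat.
Hypothesis n_gt0 : (0 < n)%N.

Local Notation F := (fourier n).
Local Notation sqrtn := (sqrtC (n%:R : algC)).

Let omega_n_prim : n.-primitive_root (omega n) := omega_prim n_gt0.

Lemma sqrtn_real : sqrtn \is Num.real.
Proof. by rewrite ger0_real // sqrtC_ge0 ler0n. Qed.

Lemma sqrtn_neq0 : sqrtn != 0.
Proof. by rewrite sqrtC_eq0 pnatr_eq0 -lt0n. Qed.

Lemma natrn_neq0 : n%:R != 0 :> algC.
Proof. by rewrite pnatr_eq0 -lt0n. Qed.

Definition ord_opp (k : 'I_n) : 'I_n := Ordinal (ltn_pmod (n - k) (ord_pos k)).

Lemma dvdn_add_ord_opp (i k : 'I_n) : (n %| i + k)%N = (i == ord_opp k).
Proof.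
have -> : (i == ord_opp k) = (i == (n - k) %% n %[mod n])%N by rewrite modn_mod modn_small.
by rewrite -(eqn_modDr k) modnDml subnK ?modnn // ltnW.
Qed.

Lemma ord_oppK : involutive ord_opp.
Proof. by move=> k; apply/eqP; rewrite eq_sym -dvdn_add_ord_opp addnC dvdn_add_ord_opp. Qed.

Lemma ord_opp_cdiff (i j : 'I_n) : ord_opp (cdiff j i) = cdiff i j.
Proof.
apply/esym/eqP; rewrite -dvdn_add_ord_opp /dvdn /= modnDm.
have := ltn_ord i; have := ltn_ord j => lt_j lt_i.
have -> : (j + n - i + (i + n - j) = n * 2)%N by lia.
by rewrite modnMr.
Qed.

Definition ord_add (i m : 'I_n) : 'I_n := Ordinal (ltn_pmod (i + m) (ord_pos i)).

Lemma cdiff_ord_add (i m : 'I_n) : cdiff i (ord_add i m) = m.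
Proof.
apply/val_inj => /=; have := ltn_ord i; have := ltn_ord m => lt_m lt_i.
rewrite -addnBA; last lia.
rewrite modnDml; have -> : (i + m + (n - i) = m + n)%N by lia.
by rewrite modnDr modn_small.
Qed.

Lemma ord_add_cdiff (i j : 'I_n) : ord_add i (cdiff i j) = j.
Proof.
apply/val_inj => /=; have := ltn_ord i; have := ltn_ord j => lt_j lt_i.
rewrite modnDmr; have -> : (i + (j + n - i) = j + n)%N by lia.
by rewrite modnDr modn_small.
Qed.

Lemma circE (y : 'rV[algC]_n) i j : circ y i j = y 0 (cdiff i j).
Proof. by rewrite mxE. Qed.

Lemma circ_row0 (y : 'rV[algC]_n) k : circ y (Ordinal n_gt0) k = y 0 k.
Proof. by rewrite mxE; congr (y 0 _); apply/val_inj; rewrite /= subn0 modnDr modn_small. Qed.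

Lemma circ_inj : injective (@circ n).
Proof.
move=> x y xy; apply/rowP => k.
by have := congr1 (fun M : 'M[algC]_n => M (Ordinal n_gt0) k) xy; rewrite /= !circ_row0.
Qed.

Lemma unimodular_circ (y : 'rV[algC]_n) : unimodular (circ y) <-> forall k, `|y 0 k| = 1.
Proof. by split=> y1 k; [rewrite -circ_row0 | move=> j; rewrite mxE]. Qed.

Lemma sum_omega_exp a :
  \sum_(j < n) omega n ^+ (j * a) = if (n %| a)%N then n%:R else 0.
Proof.
case: ifP => [n_dvd_a|n_ndvd_a].
  rewrite (eq_bigr (fun _ => 1)) ?sumr_const ?card_ord // => j _.
  by rewrite mulnC exprM; move: n_dvd_a; rewrite (prim_order_dvd omega_n_prim) => /eqP ->; rewrite expr1n.
have wa1 : omega n ^+ a != 1 by rewrite -(prim_order_dvd omega_n_prim) n_ndvd_a.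
have wan : (omega n ^+ a) ^+ n = 1 by rewrite -exprM mulnC exprM (prim_expr_order omega_n_prim) expr1n.
rewrite (eq_bigr (fun j : 'I_n => (omega n ^+ a) ^+ j)) => [|j _]; last by rewrite -exprM mulnC.
have := subrX1 (omega n ^+ a) n; rewrite wan subrr => /esym/eqP.
by rewrite mulf_eq0 subr_eq0 (negbTE wa1) => /eqP.
Qed.

Lemma conj_omega_exp (j k : 'I_n) : (omega n ^+ (j * k))^* = omega n ^+ (j * ord_opp k).
Proof.
have w1 : `|omega n| = 1 := norm_unity_root n_gt0 (prim_expr_order omega_n_prim).
set a := omega n ^+ (j * k); set b := omega n ^+ (j * ord_opp k).
have ab : a * b = 1.
  rewrite -exprD -mulnDr mulnC exprM.
  have := dvdn_add_ord_opp (ord_opp k) k; rewrite eqxx addnC.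
  by rewrite (prim_order_dvd omega_n_prim) => /eqP ->; rewrite expr1n.
have a1 : `|a| = 1 by rewrite normrX w1 expr1n.
by rewrite -[a^*]mulr1 -ab mulrA -normCKC a1 expr1n mul1r.
Qed.

Lemma conj_fourier (l c : 'I_n) : (F l c)^* = F l (ord_opp c).
Proof. by rewrite !mxE rmorphM fmorphV /= (conj_Creal sqrtn_real) conj_omega_exp. Qed.

Lemma fourier_mul_omega_exp (i j k : 'I_n) :
  F j i * F j k = omega n ^+ (j * (i + k)) / n%:R.
Proof.
by rewrite !mxE mulrACA -exprD -invfM -expr2 sqrtCK mulnDr.
Qed.

Lemma fourier_sym (i j : 'I_n) : F i j = F j i.
Proof. by rewrite !mxE mulnC. Qed.

Lemma sum_fourier_mul (i k : 'I_n) : \sum_j F j i * F j k = (i == ord_opp k)%:R.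
Proof.
under eq_bigr do rewrite fourier_mul_omega_exp.
rewrite -mulr_suml sum_omega_exp dvdn_add_ord_opp.
by case: (i == _); rewrite ?mul0r ?mulfV ?natrn_neq0.
Qed.

Lemma fourier_mul_adj : F *m adjmx F = 1%:M.
Proof.
apply/matrixP => i k; rewrite !mxE.
under eq_bigr => j _ do rewrite adjmxE (fourier_sym k) conj_fourier (fourier_sym i).
by rewrite sum_fourier_mul ord_oppK.
Qed.

Lemma adj_mul_fourier : adjmx F *m F = 1%:M.
Proof. exact: mulmx1C fourier_mul_adj. Qed.

Lemma fourier_vec_entry (x : 'rV[algC]_n) k : fourier_vec x 0 k = \sum_j F k j * x 0 j.
Proof. by rewrite mxE. Qed.

Lemma fourier_vecE (x : 'rV[algC]_n) : fourier_vec x = x *m F.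
Proof. by apply/rowP => i; rewrite !mxE; apply: eq_bigr => j _; rewrite mulrC fourier_sym. Qed.

Lemma fourier_sqr : F *m F = \matrix_(i, k) (i == ord_opp k)%:R.
Proof.
apply/matrixP => i k; rewrite !mxE -sum_fourier_mul.
by apply: eq_bigr => j _; rewrite fourier_sym.
Qed.

Lemma fourier_vec2 (x : 'rV[algC]_n) : fourier_vec (fourier_vec x) = \row_k x 0 (ord_opp k).
Proof.
apply/rowP => k; rewrite !fourier_vecE -mulmxA fourier_sqr !mxE (bigD1 (ord_opp k)) //=.
by rewrite big1 => [|i /negbTE opp_k]; rewrite !mxE ?eqxx ?opp_k ?mulr1 ?mulr0 ?addr0.
Qed.

Lemma fourier_vec4 (x : 'rV[algC]_n) : fourier_vec (fourier_vec (fourier_vec (fourier_vec x))) = x.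
Proof. by rewrite !fourier_vec2; apply/rowP => k; rewrite !mxE ord_oppK. Qed.

Lemma fourier_vec_inj : injective (@fourier_vec n).
Proof.
by apply: (can_inj (g := fun y => fourier_vec (fourier_vec (fourier_vec y)))) => x; rewrite fourier_vec4.
Qed.

Lemma circ_fourier (x : 'rV[algC]_n) :
  circ x *m F = F *m diag_mx (sqrtn *: fourier_vec x).
Proof.
apply/matrixP => i k; rewrite fourier_vecE mul_mx_diag !mxE.
rewrite (reindex (ord_add i)) /=; last first.
  by apply: onW_bij; exists (cdiff i) => m; rewrite ?cdiff_ord_add ?ord_add_cdiff.
rewrite mulrA divfK ?sqrtn_neq0 // mulr_sumr; apply: eq_bigr => m _.
rewrite !mxE cdiff_ord_add.
have -> : omega n ^+ ((i + m) %% n * k) = omega n ^+ (i * k) * omega n ^+ (m * k).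
  by rewrite -exprD -(prim_expr_mod omega_n_prim) modnMml (prim_expr_mod omega_n_prim) mulnDl.
ring.
Qed.

Lemma circ_diag (x : 'rV[algC]_n) :
  circ x = F *m diag_mx (sqrtn *: fourier_vec x) *m adjmx F.
Proof. by rewrite -circ_fourier -mulmxA fourier_mul_adj mulmx1. Qed.

Lemma adjmx_fourier_diag (d : 'rV[algC]_n) :
  adjmx (F *m diag_mx d *m adjmx F) = F *m diag_mx (map_mx Num.conj d) *m adjmx F.
Proof. by rewrite !adjmx_mul adjmxK adjmx_diag mulmxA. Qed.

Lemma mul_fourier_diag (d e : 'rV[algC]_n) :
  (F *m diag_mx d *m adjmx F) *m (F *m diag_mx e *m adjmx F) =
  F *m diag_mx (\row_k (d 0 k * e 0 k)) *m adjmx F.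
Proof.
rewrite !mulmxA -[_ *m adjmx F *m F]mulmxA adj_mul_fourier mulmx1.
by rewrite -[F *m _ *m _]mulmxA mulmx_diag.
Qed.

Lemma circ_mul_adj (x : 'rV[algC]_n) : circ x *m adjmx (circ x) =
  F *m diag_mx (\row_k (n%:R * `|fourier_vec x 0 k| ^+ 2)) *m adjmx F.
Proof.
rewrite circ_diag adjmx_fourier_diag mul_fourier_diag; congr (F *m diag_mx _ *m _).
apply/rowP => k; rewrite !mxE /= rmorphM /= (conj_Creal sqrtn_real).
by rewrite mulrACA -expr2 sqrtCK normCK.
Qed.

Lemma adj_mul_circ (x : 'rV[algC]_n) : adjmx (circ x) *m circ x = circ x *m adjmx (circ x).
Proof.
rewrite circ_diag adjmx_fourier_diag !mul_fourier_diag; congr (F *m diag_mx _ *m _).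
by apply/rowP => k; rewrite !mxE mulrC.
Qed.

Lemma fourier_conj_scalar (M : 'M[algC]_n) c :
  F *m M *m adjmx F = c%:M <-> M = c%:M.
Proof.
split=> [FMF|->]; last by rewrite mul_mx_scalar -scalemxAl fourier_mul_adj scalemx1.
have -> : M = adjmx F *m (F *m M *m adjmx F) *m F.
  by rewrite !mulmxA adj_mul_fourier mul1mx -mulmxA adj_mul_fourier mulmx1.
by rewrite FMF mul_mx_scalar -scalemxAl adj_mul_fourier scalemx1.
Qed.

Lemma circ_mul_adj_scalar (x : 'rV[algC]_n) :
  circ x *m adjmx (circ x) = n%:R%:M <-> unimodular (Phi x).
Proof.
rewrite circ_mul_adj fourier_conj_scalar /Phi unimodular_circ.
move: (fourier_vec x) => y.
split=> [/matrixP nE k | Fx1]; last first.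
  by apply/matrixP => i j; rewrite !mxE Fx1 expr1n mulr1.
have := nE k k; rewrite !mxE eqxx !mulr1n => nFx.
apply/eqP; rewrite -(sqrp_eq1 (normr_ge0 _)); apply/eqP.
by apply: (mulfI natrn_neq0); rewrite mulr1.
Qed.

Lemma unitary_scale_sqrtn (H : 'M[algC]_n) :
  unitary (sqrtn^-1 *: H) <-> H *m adjmx H = n%:R%:M /\ adjmx H *m H = n%:R%:M.
Proof.
have scale_eq1 (M : 'M[algC]_n) : n%:R^-1 *: M = 1%:M <-> M = n%:R%:M.
  split=> [M1|->]; last by rewrite scale_scalar_mx mulVf ?natrn_neq0.
  have := congr1 (fun A => n%:R *: A) M1; rewrite /= scalerA mulfV ?natrn_neq0 // scale1r => ->.
  by rewrite scale_scalar_mx mulr1.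
have sqrtnV2 : sqrtn^-1 * (sqrtn^-1)^* = n%:R^-1.
  by rewrite fmorphV /= (conj_Creal sqrtn_real) -invfM -expr2 sqrtCK.
rewrite /unitary adjmx_scale -!scalemxAl -!scalemxAr !scalerA [_^* * _]mulrC sqrtnV2.
by rewrite !scale_eq1.
Qed.

Lemma in_sqrtU_unitary (H : 'M[algC]_n) : in_sqrtU H <-> unitary (sqrtn^-1 *: H).
Proof.
split=> [[U [U_unitary ->]]|H_unitary]; first by rewrite scalerA mulVf ?sqrtn_neq0 ?scale1r.
by exists (sqrtn^-1 *: H); rewrite scalerA mulfV ?sqrtn_neq0 ?scale1r.
Qed.

Lemma in_sqrtU_circ (x : 'rV[algC]_n) : in_sqrtU (circ x) <-> unimodular (Phi x).
Proof.
rewrite in_sqrtU_unitary unitary_scale_sqrtn adj_mul_circ circ_mul_adj_scalar.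
by split=> [[]|].
Qed.

Lemma Ccirc_iff (x : 'rV[algC]_n) : Ccirc x <-> unimodular (circ x) /\ unimodular (Phi x).
Proof. by rewrite /Ccirc /complex_hadamard -in_sqrtU_unitary in_sqrtU_circ. Qed.

Lemma Ccirc_fourier_vec (x : 'rV[algC]_n) : Ccirc x -> Ccirc (fourier_vec x).
Proof.
rewrite !Ccirc_iff /Phi fourier_vec2 !unimodular_circ => -[x1 Fx1]; split=> // k.
by rewrite mxE x1.
Qed.

Lemma adjmx_Phi (x : 'rV[algC]_n) : adjmx (Phi x) = Phi (map_mx Num.conj x).
Proof.
apply/matrixP => i j; rewrite adjmxE /Phi !circE !fourier_vec_entry rmorph_sum.
apply: eq_bigr => l _; rewrite rmorphM /= (fourier_sym (cdiff j i)) conj_fourier ord_opp_cdiff.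
by rewrite fourier_sym [map_mx _ _ _ _]mxE.
Qed.

Lemma Phi_inj : injective (@Phi n).
Proof. by move=> x y /circ_inj/fourier_vec_inj. Qed.

Lemma Phi_self_adjoint (x : 'rV[algC]_n) :
  adjmx (Phi x) = Phi x <-> forall k, x 0 k \is Num.real.
Proof.
rewrite adjmx_Phi; split=> [/Phi_inj/rowP xE k | x_real].
  by rewrite CrealE -{2}xE mxE.
by congr Phi; apply/rowP => k; rewrite mxE conj_Creal.
Qed.

Lemma Ccirc2_iff (x : 'rV[algC]_n) : Ccirc2 x <-> Ccirc x /\ forall k, x 0 k \is Num.real.
Proof.
split=> [[Cx x_pm1]|[Cx x_real]]; split=> //.
  by move=> k; rewrite -circ_row0; case/pm1_iff_real_norm1: (x_pm1 (Ordinal n_gt0) k).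
move=> i j; apply/pm1_iff_real_norm1; split; first by rewrite circE x_real.
by case/Ccirc_iff: Cx => x1 _; apply: x1.
Qed.

Lemma in_sqrtO_circ (x : 'rV[algC]_n) :
  in_sqrtO (circ x) <-> in_sqrtU (circ x) /\ forall k, x 0 k \is Num.real.
Proof.
split=> [[O [[O_real [OOt OtO]] xO]]|[[U [U_unitary xU]] x_real]].
  split=> [|k]; first by exists O; rewrite /unitary adjmx_real.
  by rewrite -circ_row0 xO mxE rpredM ?sqrtn_real.
have U_real i j : U i j \is Num.real.
  have -> : U = sqrtn^-1 *: circ x by rewrite xU scalerA mulVf ?sqrtn_neq0 ?scale1r.
  by rewrite !mxE rpredM ?rpredV ?sqrtn_real.
by exists U; rewrite /real_orthogonal -adjmx_real.
Qed.

End Circulant.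

Theorem theorem3p2 (n : nat) (hn : (0 < n)%N) :
  (* Phi maps C^circ_n(oo) into itself *)
  (forall x : 'rV[algC]_n, Ccirc x -> Ccirc (fourier_vec x)) /\
  (* injectively *)
  (forall x y : 'rV[algC]_n, Ccirc x -> Ccirc y -> Phi x = Phi y -> circ x = circ y) /\
  (* and onto C^circ_n(oo) *)
  (forall y : 'rV[algC]_n, Ccirc y -> exists x, Ccirc x /\ Phi x = circ y) /\
  (* C^circ_n(2) is mapped into C^circ,sa_n(oo) *)
  (forall x : 'rV[algC]_n, Ccirc2 x -> Ccirc_sa (fourier_vec x)) /\
  (* and onto it *)
  (forall y : 'rV[algC]_n, Ccirc_sa y -> exists x, Ccirc2 x /\ Phi x = circ y) /\
  (* H in sqrt n U(n) iff Phi(H) has unimodular entries *)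
  (forall x : 'rV[algC]_n, in_sqrtU (circ x) <-> unimodular (Phi x)) /\
  (* H in sqrt n O(n) iff Phi(H) self-adjoint with unimodular entries *)
  (forall x : 'rV[algC]_n,
      in_sqrtO (circ x) <-> (adjmx (Phi x) = Phi x /\ unimodular (Phi x))).
Proof.
pose Finv (y : 'rV[algC]_n) := fourier_vec (fourier_vec (fourier_vec y)).
have Ccirc_Finv y : Ccirc y -> Ccirc (Finv y).
  by move=> Cy; do 3!apply: (Ccirc_fourier_vec hn).
have Phi_Finv y : Phi (Finv y) = circ y by rewrite /Phi fourier_vec4.
split; first exact: Ccirc_fourier_vec.
split; first by move=> x y _ _ /(Phi_inj hn) ->.
split; first by move=> y Cy; exists (Finv y); split; [exact: Ccirc_Finv|].
split.
  move=> x /(Ccirc2_iff hn) [Cx x_real]; split; first exact: Ccirc_fourier_vec.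
  exact/(Phi_self_adjoint hn).
split.
  move=> y [Cy y_sa]; exists (Finv y); split=> //.
  apply/(Ccirc2_iff hn); split; first exact: Ccirc_Finv.
  by apply/(Phi_self_adjoint hn); rewrite Phi_Finv.
split; first exact: in_sqrtU_circ.
move=> x; rewrite in_sqrtO_circ // in_sqrtU_circ // Phi_self_adjoint //.
by split=> -[]; split.
Qed.
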